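(* For $k\ge0$ let $\Delta_k$ be the path graph with $2k+1$ vertices and $2k$ edges (vertices labeled consecutively along the path), so $\Delta_0$ is a single vertex. Then, as formal power series, $$\tan x=\sum_{k=0}^{\infty}\frac{|c_{\Delta_k}|}{(2k+1)!}\,x^{2k+1}.$$
   Context: A labeled graph with $V$ vertices and $E$ edges is a map $s:\{1,\ldots,E\}\to\mathcal{P}_2\{1,\ldots,V\}$; edges $\{i,j\}$, $i<j$, are oriented $i\to j$. $c_\Gamma:=\sum_{\sigma\in S_V}\prod_{e:\,i\to j}\operatorname{sign}(\sigma(j)-\sigma(i))$ (its absolute value does not depend on the labeling). *)

From mathcomp Require Import all_boot all_order all_algebra all_fingroup.
Set Implicit Arguments. Unset Strict Implicit. Unset Printing Implicit Defensive.
Import GRing.Theory Num.Theory.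
Local Open Scope ring_scope.

(* A labeled graph with V vertices and E edges: s : 'I_E -> 'I_V * 'I_V,
   where s e = (a, b) denotes the unordered edge {a, b} (a <> b). *)
Definition edge_tail (V : nat) (p : 'I_V * 'I_V) : 'I_V :=
  if (p.1 < p.2)%N then p.1 else p.2.
Definition edge_head (V : nat) (p : 'I_V * 'I_V) : 'I_V :=
  if (p.1 < p.2)%N then p.2 else p.1.

Definition c_graph (V E : nat) (s : 'I_E -> 'I_V * 'I_V) : int :=
  \sum_(sigma : 'S_V) \prod_(e : 'I_E)
     Num.sg ((sigma (edge_head (s e)))%:Z - (sigma (edge_tail (s e)))%:Z).

Definition path_edges (k : nat) : 'I_(2 * k) -> 'I_((2 * k).+1) * 'I_((2 * k).+1) :=
  fun e => (inord (nat_of_ord e), inord (nat_of_ord e).+1).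

Definition abs_c_path (k : nat) : nat := absz (c_graph (@path_edges k)).

(* Let [seidel n j] be the number of permutations of {0..n} ending with j,
   each counted with sign (-1)^(number of descents).  Conditioning on the
   previous value gives the recursion of a signed Seidel-Entringer
   (boustrophedon) triangle, whose n-th row sums to c of the path with n+1
   vertices; call these row sums a_(n+1), with a_0 = 0.  The j-differences of
   row n are twice row n-1, so Newton's forward-difference formula expresses
   the diagonal a_m = seidel m m through the first column, which is
   [m = 0] - a_m.  This is the coefficient form of g (1 + e^(2x)) = e^(2x) - 1
   for the exponential generating function g of (a_m), i.e. g = tanh;
   multiplying by e^(-x) gives g cosh = sinh.  Turning tanh into tan by the
   signs (-1)^k on the odd coefficients gives T cos = sin for
   T = sum_k (-1)^k a_(2k+1) x^(2k+1) / (2k+1)!, and |a_m| <= m! makes the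
   Cauchy product valid for |x| < 1, where cos x <> 0, so T = tan there.
   Finally the rows of the triangle alternate in sign and are monotone, so
   (-1)^k a_(2k+1) = |c_(Delta_k)|. *)

From mathcomp Require Import all_boot all_order all_algebra all_fingroup.
From mathcomp Require Import zify ring Rstruct.
Set Implicit Arguments. Unset Strict Implicit. Unset Printing Implicit Defensive.
Import Order.TTheory GRing.Theory Num.Theory.

Section LiftPerm.
Local Open Scope ring_scope.
Variables (n : nat) (i0 j0 : 'I_n.+1).

Definition unlift_perm_fun (s : 'S_n.+1) (k : 'I_n) : 'I_n :=
  odflt k (unlift (s i0) (s (lift i0 k))).

Lemma lift_unlift_perm_fun (s : 'S_n.+1) k :
  lift (s i0) (unlift_perm_fun s k) = s (lift i0 k).
Proof.
have : s i0 != s (lift i0 k) by rewrite (inj_eq perm_inj) neq_lift.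
by case/unlift_some => k' Ek Eu; rewrite /unlift_perm_fun Eu Ek.
Qed.

Lemma unlift_perm_fun_inj (s : 'S_n.+1) : injective (unlift_perm_fun s).
Proof.
move=> k1 k2 /(congr1 (lift (s i0))); rewrite !lift_unlift_perm_fun.
by move/perm_inj/lift_inj.
Qed.

Definition unlift_perm (s : 'S_n.+1) : 'S_n := perm (@unlift_perm_fun_inj s).

Lemma unlift_permK t : unlift_perm (lift_perm i0 j0 t) = t.
Proof.
apply/permP => k; apply: (@lift_inj _ j0).
by rewrite permE -{1}(lift_perm_id i0 j0 t) lift_unlift_perm_fun lift_perm_lift.
Qed.

Lemma unlift_permKV (s : 'S_n.+1) : s i0 = j0 -> lift_perm i0 j0 (unlift_perm s) = s.
Proof.
move=> sij; apply/permP => k.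
case: (unliftP i0 k) => [k'|] ->; rewrite ?lift_perm_id //.
by rewrite lift_perm_lift permE -sij lift_unlift_perm_fun.
Qed.

Lemma sum_lift_perm (R : nmodType) (F : 'S_n.+1 -> R) :
  \sum_(s : 'S_n.+1 | s i0 == j0) F s = \sum_(t : 'S_n) F (lift_perm i0 j0 t).
Proof.
rewrite (reindex (lift_perm i0 j0)) /=; last first.
  by exists unlift_perm => [t _ | s /eqP/unlift_permKV //]; rewrite unlift_permK.
by apply: eq_bigl => t; rewrite lift_perm_id eqxx.
Qed.

End LiftPerm.

Section NatSums.
Local Open Scope ring_scope.

Lemma sum_nat_split_rev (V : nmodType) (F : nat -> V) n j : (j <= n.+1)%N ->
  \sum_(0 <= v < n.+1) F v =
  \sum_(0 <= v < (n.+1 - j)%N) F v + \sum_(0 <= u < j) F (n - u)%N.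
Proof.
move=> le_j; rewrite (@big_cat_nat _ _ _ (n.+1 - j)%N) ?leq_subr //=; congr (_ + _).
rewrite -{1}(add0n (n.+1 - j)%N) big_addn subKn // big_nat_rev /=.
by apply: eq_big_nat => u /andP [_ lt_uj]; congr F; lia.
Qed.

Lemma sum_nat_rev_scale (R : pzSemiRingType) (F : nat -> R) (c : R) n :
  (forall v, (v <= n)%N -> F (n - v)%N = c * F v) ->
  \sum_(0 <= v < n.+1) F v = c * \sum_(0 <= v < n.+1) F v.
Proof.
move=> F_rev; rewrite {1}big_nat_rev big_distrr /=.
by apply: eq_big_nat => v /andP [_ lt_vn]; rewrite add0n subSS F_rev // -ltnS.
Qed.

End NatSums.

Lemma hockey_stick i j : (\sum_(0 <= v < j) 'C(v, i) = 'C(j, i.+1))%N.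
Proof.
elim: j => [|j IH]; first by rewrite big_geq.
by rewrite big_nat_recr //= IH binS.
Qed.

Lemma mul_bin_sub n k i : (i <= k)%N -> (k <= n)%N ->
  ('C(n, k) * 'C(k, i) = 'C(n, i) * 'C(n - i, k - i))%N.
Proof.
move=> le_ik le_kn; set P := (i`! * (k - i)`! * (n - k)`!)%N.
have P_gt0 : (0 < P)%N by rewrite !muln_gt0 !fact_gt0.
have lhsP : ('C(n, k) * 'C(k, i) * P = n`!)%N.
  by rewrite /P -(bin_fact le_kn) -(bin_fact le_ik); ring.
have rhsP : ('C(n, i) * 'C(n - i, k - i) * P = n`!)%N.
  have le_ki_ni : (k - i <= n - i)%N by lia.
  have n_k : (n - i - (k - i) = n - k)%N by lia.
  by rewrite /P -(bin_fact (leq_trans le_ik le_kn)) -(bin_fact le_ki_ni) n_k; ring.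
by apply/eqP; rewrite -(eqn_pmul2r P_gt0) lhsP rhsP.
Qed.

Section BinomialConvolution.
Local Open Scope ring_scope.
Variable R : comNzRingType.
Implicit Types (f g h : nat -> R) (n : nat).

(* The coefficients of the product of the exponential generating functions
   of [f] and [g]. *)
Definition binconv f g n : R :=
  \sum_(0 <= k < n.+1) 'C(n, k)%:R * f k * g (n - k)%N.

Lemma eq_binconv f1 f2 g1 g2 :
  f1 =1 f2 -> g1 =1 g2 -> binconv f1 g1 =1 binconv f2 g2.
Proof. by move=> eq_f eq_g n; apply: eq_bigr => k _; rewrite eq_f eq_g. Qed.

Lemma binconvC f g n : binconv f g n = binconv g f n.
Proof.
rewrite /binconv big_nat_rev /=; apply: eq_big_nat => k /andP [_]; rewrite ltnS => le_kn.
by rewrite add0n subSS bin_sub // subKn // mulrAC.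
Qed.

Lemma binconvDl f g h n :
  binconv (fun k => f k + g k) h n = binconv f h n + binconv g h n.
Proof. by rewrite /binconv -big_split; apply: eq_bigr => k _; rewrite mulrDr mulrDl. Qed.

Lemma binconvBl f g h n :
  binconv (fun k => f k - g k) h n = binconv f h n - binconv g h n.
Proof. by rewrite /binconv -sumrB; apply: eq_bigr => k _; rewrite mulrBr mulrBl. Qed.

Lemma binconvDr f g h n :
  binconv f (fun k => g k + h k) n = binconv f g n + binconv f h n.
Proof. by rewrite /binconv -big_split; apply: eq_bigr => k _; rewrite mulrDr. Qed.

Lemma binconv_deltal g n : binconv (fun k => (k == 0%N)%:R) g n = g n.
Proof.
rewrite /binconv big_nat_recl // big1_seq ?addr0 => [|k _]; last by rewrite mulr0 mul0r.
by rewrite bin0 subn0 !mul1r.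
Qed.

Lemma binconv_pow (a b : R) n :
  binconv (fun k => a ^+ k) (fun k => b ^+ k) n = (a + b) ^+ n.
Proof.
rewrite addrC exprDn /binconv big_mkord; apply: eq_bigr => k _.
by rewrite -mulr_natl; ring.
Qed.

Lemma binconvA f g h n : binconv (binconv f g) h n = binconv f (binconv g h) n.
Proof.
have widen k : (k <= n)%N ->
    binconv f g k = \sum_(0 <= i < n.+1) 'C(k, i)%:R * f i * g (k - i)%N.
  move=> le_kn; rewrite /binconv (@big_cat_nat _ _ _ k.+1 0 n.+1) //=.
  rewrite [X in _ + X]big1_seq ?addr0 // => i.
  by move=> /andP [_]; rewrite mem_index_iota => /andP [lt_ki _]; rewrite bin_small // !mul0r.
rewrite {1}/binconv (eq_big_nat _ _ (F2 := fun k => \sum_(0 <= i < n.+1)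
    'C(n, k)%:R * ('C(k, i)%:R * f i * g (k - i)%N) * h (n - k)%N)); last first.
  move=> k /andP [_]; rewrite ltnS => le_kn.
  by rewrite widen // big_distrr big_distrl.
rewrite exchange_big_nat /=; apply: eq_big_nat => i /andP [_]; rewrite ltnS => le_in.
rewrite /binconv big_distrr /= (@big_cat_nat _ _ _ i 0 n.+1) ?leqW //=.
rewrite big1_seq ?add0r => [|k]; last first.
  move=> /andP [_]; rewrite mem_index_iota => /andP [_ lt_ki].
  by rewrite (bin_small lt_ki) !(mul0r, mulr0).
rewrite -{1}(add0n i) big_addn subSn //.
apply: eq_big_nat => l /andP [_ lt_l]; have le_li_n : (l + i <= n)%N by lia.
have binE := mul_bin_sub (leq_addl l i) le_li_n; rewrite addnK in binE.
rewrite addnK (_ : (n - (l + i) = n - i - l)%N); last by lia.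
transitivity (('C(n, l + i) * 'C(l + i, i))%:R * (f i * g l * h (n - i - l)%N) : R).
  by rewrite natrM; ring.
by rewrite binE natrM; ring.
Qed.

End BinomialConvolution.

(** * Signed permutation counts *)

Section DescentSign.
Local Open Scope ring_scope.

Definition desc_sign n (s : 'S_n.+1) : int :=
  \prod_(i < n) Num.sg ((s (inord i.+1))%:Z - (s (inord i))%:Z).

Lemma c_graph_path k :
  c_graph (@path_edges k) = \sum_(s : 'S_((2 * k).+1)) desc_sign s.
Proof.
apply: eq_bigr => s _; apply: eq_bigr => e _.
have he := ltn_ord e.
by rewrite /path_edges /edge_head /edge_tail /= !inordK ?ltnSn //; lia.
Qed.

Lemma desc_sign_norm n (s : 'S_n.+1) : `|desc_sign s| <= 1.
Proof.
apply: (big_ind (fun x : int => `|x| <= 1)) => // [x y hx hy | i _].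
  by rewrite normrM mulr_ile1.
by rewrite normr_sg; case: (_ != 0).
Qed.

Lemma sgr_natB (a b : nat) :
  Num.sg (a%:Z - b%:Z) = if (b < a)%N then 1 else if (a < b)%N then -1 else 0.
Proof.
case: (ltngtP a b) => h.
- by apply: ltr0_sg; rewrite subr_lt0 ltz_nat.
- by apply: gtr0_sg; rewrite subr_gt0 ltz_nat.
- by rewrite h subrr sgr0.
Qed.

Lemma sgr_bumpB (h a b : nat) :
  Num.sg ((bump h a)%:Z - (bump h b)%:Z) = Num.sg (a%:Z - b%:Z).
Proof. by rewrite !sgr_natB !ltnNge !leq_bump2. Qed.

Lemma inord_lift_max n i : (i <= n)%N ->
  (inord i : 'I_n.+2) = lift ord_max (inord i : 'I_n.+1).
Proof.
move=> le_in; apply: val_inj; rewrite [RHS]lift_max /= !inordK //; lia.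
Qed.

(* [lift_perm ord_max J t] is [t] with its values >= [J] shifted up and [J]
   appended; the new last step is an ascent iff [t] ended below [J]. *)
Lemma desc_sign_lift_max n (J : 'I_n.+2) (t : 'S_n.+1) :
  desc_sign (lift_perm ord_max J t) =
  desc_sign t * (if (t ord_max < J)%N then 1 else -1).
Proof.
rewrite /desc_sign big_ord_recr /=; congr (_ * _).
  apply: eq_bigr => i _; have lt_in := ltn_ord i.
  by rewrite !inord_lift_max ?(ltnW lt_in) // !lift_perm_lift sgr_bumpB.
have -> : (inord n.+1 : 'I_n.+2) = ord_max by apply: val_inj; rewrite /= inordK.
have -> : (inord n : 'I_n.+2) = lift ord_max ord_max.
  by apply: val_inj; rewrite [RHS]lift_max /= inordK.
rewrite lift_perm_id lift_perm_lift /= sgr_natB /bump.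
case: (ltnP (t ord_max) J) => h; first by rewrite h.
by rewrite add1n ltnNge (leqW h) /= ltnS h.
Qed.

End DescentSign.

Section SeidelTriangle.
Local Open Scope ring_scope.

Fixpoint seidel n j : int :=
  if n is n'.+1 then \sum_(v < n'.+1) seidel n' v * (if (v < j)%N then 1 else -1)
  else (j == 0%N)%:R.

Definition seidel_row n : int := \sum_(0 <= v < n.+1) seidel n v.

Lemma sum_desc_sign_last n j : (j <= n)%N ->
  \sum_(s : 'S_n.+1 | s ord_max == j :> nat) desc_sign s = seidel n j.
Proof.
elim: n j => [|n IH] j.
  rewrite leqn0 => /eqP ->; rewrite (eq_bigl xpredT) => [|s]; last first.
    by case: (s ord_max) => -[].
  by rewrite /desc_sign; under eq_bigr do rewrite big_ord0; rewrite sumr_const card_Sn.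
move=> le_jn; pose J : 'I_n.+2 := Ordinal (le_jn : (j < n.+2)%N).
rewrite (eq_bigl (fun s : 'S_n.+2 => s ord_max == J)) // sum_lift_perm.
rewrite (partition_big (fun t : 'S_n.+1 => t ord_max) xpredT) //=.
apply: eq_bigr => v _; rewrite -IH 1?big_distrl /=; last by rewrite -ltnS.
by apply: eq_big => [t | t /eqP tv]; rewrite ?desc_sign_lift_max ?tv.
Qed.

Lemma sum_desc_sign n : \sum_(s : 'S_n.+1) desc_sign s = seidel_row n.
Proof.
rewrite (partition_big (fun s : 'S_n.+1 => s ord_max) xpredT) //= /seidel_row big_mkord.
by apply: eq_bigr => v _; rewrite -sum_desc_sign_last // -ltnS.
Qed.

Lemma seidel_row_bound n : `|seidel_row n| <= (n.+1)`!%:R.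
Proof.
rewrite -sum_desc_sign -card_Sn -sumr_const; apply: (le_trans (ler_norm_sum _ _ _)).
by apply: ler_sum => s _; apply: desc_sign_norm.
Qed.

Lemma seidelS n j : (j <= n.+1)%N ->
  seidel n.+1 j = 2 * \sum_(0 <= v < j) seidel n v - seidel_row n.
Proof.
move=> le_j; rewrite /= /seidel_row.
rewrite -(big_mkord xpredT (fun v => seidel n v * (if (v < j)%N then 1 else -1))).
rewrite !(@big_cat_nat _ _ _ j 0 n.+1) //=.
rewrite [X in X + _](eq_big_nat _ _ (F2 := seidel n)) => [|v /andP [_ ->]]; last first.
  by rewrite mulr1.
rewrite [X in _ + X](eq_big_nat _ _ (F2 := fun v => - seidel n v)); last first.
  by move=> v /andP [le_jv _]; rewrite ltnNge le_jv mulrN1.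
by rewrite sumrN; ring.
Qed.

Lemma seidelS0 n : seidel n.+1 0 = - seidel_row n.
Proof. by rewrite seidelS // big_geq // mulr0 sub0r. Qed.

Lemma seidelSS n : seidel n.+1 n.+1 = seidel_row n.
Proof. by rewrite seidelS //; ring. Qed.

Lemma seidelS_diff n i : (i <= n)%N ->
  seidel n.+1 i.+1 - seidel n.+1 i = 2 * seidel n i.
Proof.
by move=> le_in; rewrite !seidelS ?(leqW le_in) // big_nat_recr //=; ring.
Qed.

Lemma seidel_newton n j : (j <= n)%N ->
  seidel n j = \sum_(0 <= i < n.+1) 'C(j, i)%:R * 2 ^+ i * seidel (n - i) 0.
Proof.
elim: n j => [|n IH] j le_jn.
  by move: le_jn; rewrite leqn0 => /eqP ->; rewrite big_nat1.
rewrite seidelS // (eq_big_nat _ _ (F2 := fun v =>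
  \sum_(0 <= i < n.+1) 'C(v, i)%:R * 2 ^+ i * seidel (n - i) 0)); last first.
  by move=> v /andP [_ lt_vj]; rewrite IH //; lia.
rewrite exchange_big_nat /= (eq_big_nat _ _ (F2 := fun i =>
  'C(j, i.+1)%:R * 2 ^+ i * seidel (n - i) 0)); last first.
  by move=> i _; rewrite -hockey_stick natr_sum big_distrl big_distrl.
rewrite [RHS]big_nat_recl // bin0 subn0 seidelS0 big_distrr /= addrC.
by congr (_ + _); [ring | apply: eq_bigr => i _; rewrite exprS subSS; ring].
Qed.

Lemma seidel_rev n j : (j <= n)%N -> seidel n (n - j)%N = (-1) ^+ n * seidel n j.
Proof.
elim: n j => [|n IH] j le_jn; first by move: le_jn; rewrite leqn0 => /eqP ->.
have row_sym := sum_nat_rev_scale IH.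
have rev_sum : \sum_(0 <= u < j) seidel n (n - u)%N =
    (-1) ^+ n * \sum_(0 <= v < j) seidel n v.
  by rewrite big_distrr /=; apply: eq_big_nat => u /andP [_ lt_uj]; rewrite IH //; lia.
have := sum_nat_split_rev (seidel n) le_jn; rewrite -/(seidel_row n) rev_sum => row_split.
rewrite -/(seidel_row n) in row_sym.
rewrite !seidelS ?leq_subr // exprS.
have -> : \sum_(0 <= v < (n.+1 - j)%N) seidel n v =
    seidel_row n - (-1) ^+ n * \sum_(0 <= v < j) seidel n v by rewrite row_split; ring.
transitivity (seidel_row n - 2 * (-1) ^+ n * \sum_(0 <= v < j) seidel n v); first by ring.
by rewrite {1}row_sym; ring.
Qed.

Lemma seidel_row_sym n : seidel_row n = (-1) ^+ n * seidel_row n.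
Proof. exact: sum_nat_rev_scale (@seidel_rev n). Qed.

Lemma seidelS_mono n (e : int) : (forall i, (i <= n)%N -> 0 <= e * seidel n i) ->
  forall a b, (a <= b <= n.+1)%N -> e * seidel n.+1 a <= e * seidel n.+1 b.
Proof.
move=> row_pos a b /andP [le_ab le_b]; elim: b le_ab le_b => [|b IHb] le_ab le_b.
  by move: le_ab; rewrite leqn0 => /eqP ->.
case: (eqVneq a b.+1) => [-> // | ne_ab].
apply: le_trans (IHb _ _) _; [lia | lia |].
rewrite -subr_ge0 -mulrBr seidelS_diff; last lia.
by rewrite mulrCA mulr_ge0 // row_pos //; lia.
Qed.

(* Row 2k+1 is antisymmetric and, times (-1)^k, nondecreasing, hence of sign
   -(-1)^k on its first half; row 2k+2 consists of twice its partial sums. *)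
Lemma seidel_even_sign k j : (j <= 2 * k)%N -> 0 <= (-1) ^+ k * seidel (2 * k) j.
Proof.
elim: k j => [|k IH] j; first by rewrite leqn0 => /eqP ->.
have sign_n : (-1) ^+ (2 * k) = 1 :> int by rewrite mulnC exprM sqrr_sign.
rewrite (_ : (2 * k.+1 = (2 * k).+2)%N); last by lia.
move: IH sign_n; move En : (2 * k)%N => n IH sign_n le_jn.
have mono := seidelS_mono IH.
have odd_row_le0 v : (v <= k)%N -> (-1) ^+ k * seidel n.+1 v <= 0.
  move=> le_vk; have /mono : (v <= n.+1 - v <= n.+1)%N by lia.
  by rewrite seidel_rev ?exprS ?sign_n ?mulr1 ?mulN1r ?mulrN; lia.
have odd_row0 : seidel_row n.+1 = 0.
  by have := seidel_row_sym n.+1; rewrite exprS sign_n mulr1 mulN1r; lia.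
have low_half i : (i <= k.+1)%N -> 0 <= (-1) ^+ k.+1 * seidel n.+2 i.
  move=> le_ik; rewrite seidelS ?odd_row0 ?subr0; last by lia.
  rewrite exprS mulN1r mulNr mulrCA big_distrr /= -mulrN -sumrN mulr_ge0 //.
  rewrite big_seq sumr_ge0 // => v; rewrite mem_index_iota => /andP [_ lt_vi].
  by rewrite oppr_ge0 odd_row_le0 //; lia.
case: (leqP j k.+1) => [|lt_kj]; first exact: low_half.
have sign_n2 : (-1) ^+ n.+2 = 1 :> int by rewrite !exprS sign_n mulr1 mulN1r opprK.
rewrite -(subKn le_jn) seidel_rev ?leq_subr // sign_n2 mul1r.
by apply: low_half; lia.
Qed.

Lemma seidel_row_even_sign k : 0 <= (-1) ^+ k * seidel_row (2 * k).
Proof.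
rewrite big_distrr /= big_seq sumr_ge0 // => v; rewrite mem_index_iota ltnS => /andP [_].
exact: seidel_even_sign.
Qed.

End SeidelTriangle.

(** * Tangent numbers *)

Section TangentNumbers.
Local Open Scope ring_scope.

(* [tanh_num m / m!] turns out to be the m-th Taylor coefficient of tanh. *)
Definition tanh_num m : int := if m is m'.+1 then seidel_row m' else 0.

Lemma seidel_0 m : seidel m 0 = (m == 0%N)%:R - tanh_num m.
Proof. by case: m => [|m]; rewrite ?seidelS0 /= ?sub0r ?subr0. Qed.

(* tanh x (1 + e^(2x)) = e^(2x) - 1 *)
Lemma tanh_num_binconv_pow2 m :
  tanh_num m + binconv tanh_num (fun k => 2 ^+ k) m = 2 ^+ m - (m == 0%N)%:R.
Proof.
case: m => [|m]; first by rewrite /binconv big_nat1 /= mulr0 mul0r addr0 expr0 subrr.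
have -> : tanh_num m.+1 =
    binconv (fun k => (k == 0%N)%:R - tanh_num k) (fun k => 2 ^+ k) m.+1.
  rewrite /= -seidelSS seidel_newton // binconvC.
  by apply: eq_bigr => k _; rewrite seidel_0.
by rewrite binconvBl binconv_deltal /=; ring.
Qed.

Lemma tanh_num_binconv_cosh n :
  binconv tanh_num (fun k => (~~ odd k)%:R) n = (odd n)%:R.
Proof.
have signE k : (-1) ^+ k = if odd k then -1 else 1 :> int.
  by rewrite -signr_odd; case: (odd k).
have two_neq0 : (2 : int) != 0 by [].
apply: (mulfI two_neq0).
(* Multiply the previous identity by e^(-x). *)
transitivity (binconv tanh_num (fun k => (-1) ^+ k + (2 + -1) ^+ k) n).
  rewrite /binconv big_distrr; apply: eq_bigr => k _ /=.
  by rewrite expr1n signE; case: (odd _) => /=; ring.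
rewrite binconvDr -(eq_binconv (frefl _) (binconv_pow 2 (-1))) -binconvA -binconvDl.
rewrite (eq_binconv tanh_num_binconv_pow2 (frefl _)) binconvBl binconv_pow binconv_deltal.
by rewrite expr1n signE; case: (odd n) => /=; ring.
Qed.

Definition tan_num k : int := if odd k then (-1) ^+ k./2 * tanh_num k else 0.
Definition cos_num k : int := if odd k then 0 else (-1) ^+ k./2.
Definition sin_num k : int := if odd k then (-1) ^+ k./2 else 0.

Lemma half_add_sub_odd n k : odd n -> odd k -> (k <= n)%N ->
  (k./2 + (n - k)./2)%N = n./2.
Proof.
move=> odd_n odd_k le_kn.
have := odd_double_half n; have := odd_double_half k; have := odd_double_half (n - k).
by rewrite oddB // odd_n odd_k -!mul2n /=; lia.
Qed.

Lemma tan_num_binconv_cos n : binconv tan_num cos_num n = sin_num n.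
Proof.
rewrite /sin_num; case: ifP => odd_n; last first.
  rewrite /binconv big1_seq // => k /andP [_]; rewrite mem_index_iota ltnS => /andP [_ le_kn].
  by rewrite /tan_num /cos_num oddB // odd_n; case: (odd k); rewrite ?(mulr0, mul0r).
transitivity ((-1) ^+ n./2 * binconv tanh_num (fun k => (~~ odd k)%:R) n).
  rewrite /binconv big_distrr; apply: eq_big_nat => k /andP [_]; rewrite ltnS => le_kn.
  rewrite /tan_num /cos_num oddB // odd_n.
  case: ifP => odd_k /=; last by rewrite !(mulr0, mul0r).
  by rewrite -(half_add_sub_odd odd_n odd_k le_kn) exprD; ring.
by rewrite tanh_num_binconv_cosh odd_n mulr1.
Qed.

Lemma abs_c_path_tan_num k : (abs_c_path k)%:Z = tan_num (2 * k).+1.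
Proof.
have sign_pos := seidel_row_even_sign k.
rewrite /abs_c_path c_graph_path sum_desc_sign abszE /tan_num /=.
rewrite mul2n odd_double uphalf_double -mul2n /=.
by rewrite -(ger0_norm sign_pos) normrM normrX normrN1 expr1n mul1r.
Qed.

Lemma tan_num_bound k : `|tan_num k| <= k`!%:R.
Proof.
rewrite /tan_num; case: (odd k); rewrite ?normr0 // normrM normrX normrN1 expr1n mul1r.
by case: k => [|k]; rewrite ?normr0 //; apply: seidel_row_bound.
Qed.

Lemma cos_num_bound k : `|cos_num k| <= k`!%:R.
Proof.
rewrite /cos_num; case: (odd k); rewrite ?normr0 // normrX normrN1 expr1n.
by rewrite (ler_nat _ 1) fact_gt0.
Qed.

End TangentNumbers.

Section ExponentialCoefficients.
Local Open Scope ring_scope.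
Context {R : numFieldType}.

Definition egf_coef (c : nat -> int) k : R := (c k)%:~R / k`!%:R.

Lemma fact_natr_neq0 k : k`!%:R != 0 :> R.
Proof. by rewrite pnatr_eq0 -lt0n fact_gt0. Qed.

Lemma egf_coef_binconv (a b : nat -> int) n :
  \sum_(0 <= k < n.+1) egf_coef a k * egf_coef b (n - k)%N = egf_coef (binconv a b) n.
Proof.
rewrite /egf_coef /binconv rmorph_sum /= mulr_suml.
apply: eq_big_nat => k /andP [_]; rewrite ltnS => le_kn.
have bin_neq0 : 'C(n, k)%:R != 0 :> R by rewrite pnatr_eq0 -lt0n bin_gt0.
rewrite -(bin_fact le_kn) !natrM !rmorphM /= mulrz_nat.
by field; rewrite bin_neq0 !fact_natr_neq0.
Qed.

Lemma egf_coef_bound (c : nat -> int) k : `|c k| <= k`!%:R -> `|egf_coef c k| <= 1.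
Proof.
move=> c_le; have fact_gt0R : (0 : R) < k`!%:R by rewrite ltr0n fact_gt0.
rewrite normrM normfV normr_nat ler_pdivrMr // mul1r -intr_norm.
by rewrite -[k`!%:R]mulrz_nat ler_int.
Qed.

End ExponentialCoefficients.

(** * Power series *)

From Stdlib Require Import Reals Factorial Lra.
From Coquelicot Require Import Coquelicot.
Local Open Scope R_scope.
Unset Implicit Arguments.

Lemma Nat_oddE n : Nat.odd n = odd n.
Proof. by elim: n => [|n IH] //; rewrite Nat.odd_succ -Nat.negb_odd IH. Qed.

Lemma Nat_div2E n : Nat.div2 n = n./2.
Proof.
have := Nat.div2_odd n; have := odd_double_half n.
by rewrite Nat_oddE -mul2n; case: (odd n) => /=; lia.
Qed.

Lemma div2_eventually : filterlim Nat.div2 eventually eventually.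
Proof.
move=> P [N HN]; exists (2 * N)%nat => n le_n; apply: HN.
by rewrite Nat_div2E; have := odd_double_half n; rewrite -mul2n; lia.
Qed.

Lemma is_series_partial_sums (a : nat -> R) (l : R) :
  is_series a l <-> is_lim_seq (sum_f_R0 a) l.
Proof. by rewrite is_series_Reals is_lim_seq_Reals. Qed.

Lemma sum_f_R0_spread_even (b : nat -> R) N :
  sum_f_R0 (fun n => if Nat.odd n then 0 else b (Nat.div2 n)) N =
  sum_f_R0 b (Nat.div2 N).
Proof.
elim: N => [|N IH] //; rewrite tech5 IH !Nat_oddE !Nat_div2E /=.
by rewrite uphalf_half; case: (odd N); rewrite /= ?Rplus_0_r.
Qed.

Lemma sum_f_R0_spread_odd (b : nat -> R) N :
  sum_f_R0 (fun n => if Nat.odd n then b (Nat.div2 n) else 0) N.+1 =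
  sum_f_R0 b (Nat.div2 N).
Proof.
elim: N => [|N IH]; first by rewrite /= Rplus_0_l.
rewrite tech5 IH !Nat_oddE !Nat_div2E /= uphalf_half negbK.
by case: (odd N); rewrite /= ?Rplus_0_r.
Qed.

Lemma is_series_spread_even (b : nat -> R) l : is_series b l ->
  is_series (fun n => if Nat.odd n then 0 else b (Nat.div2 n)) l.
Proof.
rewrite !is_series_partial_sums => /(is_lim_seq_subseq _ _ _ div2_eventually).
by apply: is_lim_seq_ext => N; rewrite sum_f_R0_spread_even.
Qed.

Lemma is_series_spread_odd (b : nat -> R) l : is_series b l ->
  is_series (fun n => if Nat.odd n then b (Nat.div2 n) else 0) l.
Proof.
rewrite !is_series_partial_sums => /(is_lim_seq_subseq _ _ _ div2_eventually) lim_b.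
by apply/is_lim_seq_incr_1; apply: is_lim_seq_ext lim_b => N; rewrite sum_f_R0_spread_odd.
Qed.

Lemma cos_termE x n : egf_coef cos_num n * x ^ n =
  if Nat.odd n then 0 else cos_n (Nat.div2 n) * (x * x) ^ Nat.div2 n.
Proof.
rewrite Nat_oddE Nat_div2E /egf_coef /cos_num /cos_n.
case: ifP => odd_n; first by rewrite mul0r Rmult_0_l.
have [m ->] : exists m, n = (2 * m)%nat.
  by exists n./2; rewrite -{1}(odd_double_half n) odd_n add0n mul2n.
by rewrite !RealsE multE mul2n doubleK rmorphXn rmorphN1 -mul2n exprM expr2.
Qed.

Lemma sin_termE x n : egf_coef sin_num n * x ^ n =
  if Nat.odd n then x * (sin_n (Nat.div2 n) * (x * x) ^ Nat.div2 n) else 0.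
Proof.
rewrite Nat_oddE Nat_div2E /egf_coef /sin_num /sin_n.
case: ifP => odd_n; last by rewrite mul0r Rmult_0_l.
have [m ->] : exists m, n = (2 * m + 1)%nat.
  by exists n./2; rewrite -{1}(odd_double_half n) odd_n addnC mul2n.
rewrite !RealsE multE plusE addn1 /= mul2n uphalf_double -mul2n rmorphXn rmorphN1.
by rewrite exprS exprM expr2 addn1 mulrCA.
Qed.

Lemma is_series_cos x : is_series (fun n => egf_coef cos_num n * x ^ n) (cos x).
Proof.
rewrite /cos; case: (exist_cos (Rsqr x)) => c /is_series_Reals /is_series_spread_even.
by apply: is_series_ext => n; rewrite cos_termE.
Qed.

Lemma is_series_sin x : is_series (fun n => egf_coef sin_num n * x ^ n) (sin x).
Proof.
rewrite /sin; case: (exist_sin (Rsqr x)) => c /is_series_Reals.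
move=> /is_series_spread_odd /(is_series_scal_l x).
apply: is_series_ext => n; rewrite sin_termE.
by case: (Nat.odd n); rewrite /scal /= /mult /= ?Rmult_0_r.
Qed.

Lemma ex_series_abs_geom {c : nat -> R} {x : R} :
  (forall n, Rabs (c n) <= 1) -> Rabs x < 1 -> ex_series (fun n => Rabs (c n * x ^ n)).
Proof.
move=> c_le1 x_lt1; apply: (ex_series_le _ (fun n => Rabs x ^ n)); last first.
  by apply: ex_series_geom; rewrite Rabs_Rabsolu.
move=> n; rewrite /norm /= /abs /= Rabs_Rabsolu Rabs_mult RPow_abs.
by rewrite -{2}(Rmult_1_l (Rabs (x ^ n))); apply: Rmult_le_compat_r; [apply: Rabs_pos|].
Qed.

Lemma is_series_cauchy_quotient {a c s : nat -> R} {x C S : R} :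
  (forall n, Rabs (a n) <= 1) -> (forall n, Rabs (c n) <= 1) -> Rabs x < 1 ->
  (forall n, sum_f_R0 (fun k => a k * c (n - k)%nat) n = s n) ->
  is_series (fun n => c n * x ^ n) C -> is_series (fun n => s n * x ^ n) S ->
  C <> 0 -> is_series (fun n => a n * x ^ n) (S / C).
Proof.
move=> a_le1 c_le1 x_lt1 conv_acs C_ser S_ser C_neq0.
have a_abs := ex_series_abs_geom a_le1 x_lt1.
have A_ser := Series_correct _ (ex_series_Rabs _ a_abs).
have := is_series_mult _ _ _ _ A_ser C_ser a_abs (ex_series_abs_geom c_le1 x_lt1).
have cauchy_term n : sum_f_R0 (fun k => a k * x ^ k * (c (n - k)%nat * x ^ (n - k))) n
    = s n * x ^ n.
  rewrite -conv_acs [RHS]Rmult_comm scal_sum; apply: sum_eq => k le_kn.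
  by rewrite (_ : x ^ n = x ^ k * x ^ (n - k)); [ring | rewrite -pow_add; f_equal; lia].
move=> /(is_series_ext _ _ _ cauchy_term) /(is_series_unique _ _).
rewrite (is_series_unique _ _ S_ser) => ->.
by rewrite /Rdiv Rinv_r_simpl_l.
Qed.

Lemma tan_termE x n :
  (if Nat.odd n then INR (abs_c_path (Nat.div2 n)) / INR (fact n) * x ^ n else 0)
  = egf_coef tan_num n * x ^ n.
Proof.
rewrite Nat_oddE Nat_div2E /egf_coef.
case: ifP => odd_n; last by rewrite /tan_num odd_n mul0r Rmult_0_l.
have [k ->] : exists k, n = (2 * k).+1.
  by exists n./2; rewrite -{1}(odd_double_half n) odd_n add1n mul2n.
rewrite -[in RHS]abs_c_path_tan_num factE !INRE RdivE -pmulrn.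
by rewrite /= mul2n uphalf_double.
Qed.

Theorem mainTheorem11 :
  exists r : R, 0 < r /\
    forall x : R, Rabs x < r ->
      is_series
        (fun n : nat =>
           if Nat.odd n
           then INR (abs_c_path (Nat.div2 n)) / INR (fact n) * x ^ n
           else 0)
        (tan x).
Proof.
exists 1; split; first exact: Rlt_0_1.
move=> x x_lt1.
have cos_pos : 0 < cos x.
  by apply: cos_gt_0; have := PI2_1; move/Rabs_def2: x_lt1; lra.
have tan_ser : is_series (fun n => egf_coef tan_num n * x ^ n) (sin x / cos x).
  refine (is_series_cauchy_quotient _ _ x_lt1 _ (is_series_cos x) (is_series_sin x) _).
  - by move=> n; apply/RleP; rewrite RabsE; apply: egf_coef_bound (tan_num_bound n).
  - by move=> n; apply/RleP; rewrite RabsE; apply: egf_coef_bound (cos_num_bound n).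
  - by move=> n; rewrite sum_f_R0E egf_coef_binconv /egf_coef tan_num_binconv_cos.
  - lra.
by apply: is_series_ext tan_ser => n; rewrite tan_termE.
Qed.
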